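(* Let $\mathcal{Y}=\{1,\dots,K\}$, let $(X,Y)$ have clean posterior $\eta(x)=[P(Y=k\mid X=x)]_k$, and let the noisy label be generated by an instance-dependent transition matrix $T(x)$, $T_{ij}(x)=P(Y^n=j\mid Y=i,X=x)$, diagonally dominant ($T_{ii}(x)>T_{ij}(x)$ for $j\ne i$). Let $Y^*(x)=\arg\max_k\eta_k(x)$ and $\delta(x)=1-\eta_{Y^*(x)}(x)$. Consider the empirical overfitted case (training set of full support with exactly one noisy label $y^n\sim P(Y^n\mid X=x)$ per $x$, empirical risk minimized per sample), in which the NC model predicts the one-hot vector $\mathbf{e}_{y^n}$ and the FC model predicts the one-hot vector $\mathbf{e}_{k^*(y^n)}$, where $k^*(j)=\arg\max_k T_{kj}(x)$. Then: (a) To first order, with error terms $\varepsilon=\mathcal{O}(\mathbb{E}_X[\delta(X)])$, \[\mathrm{ACC}_{\mathtt{NC}}=\mathbb{E}_X\big[(1-\delta(X))T_{Y^*,Y^*}(X)\big]+\varepsilon,\qquad \mathrm{ACC}_{\mathtt{FC}}=\mathbb{E}_X\big[(1-\delta(X))C_{Y^*}(X)\big]+\varepsilon,\] where $C_{Y^*}(X)=\sum_{j:\,k^*(j)=Y^*}T_{Y^*,j}(X)$ and $Y^*=Y^*(X)$. (b) The prediction confidence equals $1$ everywhere for both methods, and $\mathrm{ECE}_{\mathtt{FC}}=1-\mathrm{ACC}_{\mathtt{FC}}$, $\mathrm{ECE}_{\mathtt{NC}}=1-\mathrm{ACC}_{\mathtt{NC}}$.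
   Context: Accuracy is measured against the clean label: $\mathrm{ACC}=\mathbb{E}_X[P(Y^f=Y\mid X)]$ where $Y^f$ is the predicted class ($y^n$ for NC, $k^*(y^n)$ for FC, with $y^n$ random). For a predictor with probability output $\hat p$, confidence is $C=\max_k\hat p_k$ and $\mathrm{ECE}=\mathbb{E}_C[|P(Y=Y^f\mid C)-C|]$. NC refers to minimizing cross-entropy $-\log\hat p_{y^n}(x)$ and FC to minimizing $-\log([T(x)^\top\hat p(x)]_{y^n})$; their per-sample minimizers over the probability simplex are the one-hot vectors stated. *)

From HB Require Import structures.
From mathcomp Require Import all_boot all_order all_algebra.
From mathcomp Require Import all_classical all_reals all_analysis.
Set Implicit Arguments. Unset Strict Implicit. Unset Printing Implicit Defensive.
Import Order.TTheory GRing.Theory Num.Theory.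
Local Open Scope ring_scope.

Section Defs.
Context {R : realType} {T : Type} {K : nat}.

(* eta x : clean posterior, eta x i = P(Y = i | X = x).
   Tm x i j = P(Y^n = j | Y = i, X = x).
   f x j    = predicted class when the observed noisy label is j
             (NC : f x j = j ; FC : f x j = k*(j)).                        *)

(* P(Y^f = Y | X = x), computed from the joint conditional law
   P(Y = i, Y^n = j | X = x) = eta x i * Tm x i j. *)
Definition cond_acc (eta : T -> 'I_K -> R) (Tm : T -> 'I_K -> 'I_K -> R)
  (f : T -> 'I_K -> 'I_K) (x : T) : R :=
  \sum_(i < K) \sum_(j < K) eta x i * Tm x i j * ((f x j == i)%:R).

Definition onehot (k : 'I_K) : 'I_K -> R := fun l => (l == k)%:R.

Definition confidence (p : 'I_K -> R) : R := \big[Num.max/0]_(k < K) p k.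

Definition is_prob_vector (p : 'I_K -> R) : Prop :=
  (forall k, 0 <= p k) /\ \sum_(k < K) p k = 1.

End Defs.

Section Measure.
Context {R : realType} {d : measure_display} {T : measurableType d} {K : nat}.
Local Open Scope ereal_scope.

Definition ACC (P : probability T R) eta Tm (f : T -> 'I_K -> 'I_K) : \bar R :=
  \int[P]_x (@cond_acc R T K eta Tm f x)%:E.

(* ECE = E_C[ | P(Y = Y^f | C) - C | ] for a confidence C taking its values
   in the finite list S (S duplicate free):
   ECE = sum_{c in S} P(C = c) | P(Y = Y^f | C = c) - c |
       = sum_{c in S} | P(Y = Y^f, C = c) - c P(C = c) |,
   where the joint law of (X, Y, Y^n) is P(dx) eta x i Tm x i j and the
   prediction on (x, Y^n = j) is phat x j, with predicted class f x j. *)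
Definition ECE (P : probability T R) eta Tm (phat : T -> 'I_K -> 'I_K -> R)
  (f : T -> 'I_K -> 'I_K) (S : seq R) : \bar R :=
  \sum_(c <- S)
    `| \int[P]_x (\sum_(i < K) \sum_(j < K)
          eta x i * Tm x i j * ((confidence (phat x j) == c)%:R)
          * ((f x j == i)%:R - c))%:E |.

End Measure.

From HB Require Import structures.
From mathcomp Require Import all_boot all_order all_algebra.
From mathcomp Require Import all_classical all_reals all_analysis.
From mathcomp Require Import measurable_realfun.
Import Order.TTheory GRing.Theory Num.Theory.
Local Open Scope ring_scope.

Set Implicit Arguments. Unset Strict Implicit.

(* Given x, the conditional accuracy is the convex combination
   sum_i eta_i(x) a_i(x), where a_i(x) = P(Y^f = i | Y = i, X = x) is in [0, 1].
   Dropping every term but i = Y*(x) changes it by at most the sum of the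
   eta_i(x) over i <> Y*(x), which is delta(x); integrating gives (a) with
   constant 1, since a_{Y*} is T_{Y*,Y*} for NC and C_{Y*} for FC.  A one-hot
   prediction has confidence 1, so only the bin c = 1 contributes to the ECE,
   and there it equals E[1 - P(Y^f = Y | X)] = 1 - ACC. *)

Section ProbVector.
Context {R : realType} {K : nat}.
Implicit Types (p t a : 'I_K -> R) (f : 'I_K -> 'I_K).

Lemma confidence_onehot (k : 'I_K) : confidence (@onehot R K k) = 1.
Proof.
have off_k : \big[Num.max/0]_(i < K | i != k) onehot k i = 0 :> R.
  apply: (big_ind (fun v : R => v = 0)) => // [u v -> ->|i /negbTE].
    by rewrite maxxx.
  by rewrite /onehot => ->.
by rewrite /confidence (bigD1 k) //= off_k /onehot eqxx max_l ?ler01.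
Qed.

Lemma prob_vector_le1 p k : is_prob_vector p -> p k <= 1.
Proof.
by move=> [p0 <-]; rewrite (bigD1 k) //= lerDl sumr_ge0.
Qed.

Lemma convex_comb_ge0 p a : is_prob_vector p -> (forall i, 0 <= a i) ->
  0 <= \sum_i p i * a i.
Proof. by move=> [p0 _] a0; apply: sumr_ge0 => i _; rewrite mulr_ge0. Qed.

Lemma convex_comb_le1 p a : is_prob_vector p -> (forall i, a i <= 1) ->
  \sum_i p i * a i <= 1.
Proof.
move=> [p0 p1] a1; rewrite -p1; apply: ler_sum => i _; exact: ler_piMr.
Qed.

Lemma convex_comb_drop_terms p a k :
  is_prob_vector p -> (forall i, 0 <= a i <= 1) ->
  0 <= \sum_i p i * a i - p k * a k <= 1 - p k.
Proof.
move=> [p0 p1] a01; rewrite -p1 (bigD1 k) //= [X in _ <= _ <= X - _](bigD1 k) //=.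
rewrite addrAC subrr add0r addrAC subrr add0r.
apply/andP; split; first by apply: sumr_ge0 => i _; case/andP: (a01 i) => *; rewrite mulr_ge0.
by apply: ler_sum => i _; case/andP: (a01 i) => *; rewrite ler_piMr.
Qed.

Definition hit_prob t f (i : 'I_K) : R := \sum_j t j * (f j == i)%:R.

Lemma hit_probE t f i : hit_prob t f i = \sum_(j | f j == i) t j.
Proof.
rewrite /hit_prob [RHS]big_mkcond; apply: eq_bigr => j _.
by case: (f j == i); rewrite ?mulr1 ?mulr0.
Qed.

Lemma hit_prob_id t i : hit_prob t (fun j => j) i = t i.
Proof. by rewrite hit_probE big_pred1_eq. Qed.

Lemma hit_prob_ge0 t f i : is_prob_vector t -> 0 <= hit_prob t f i.
Proof. by move=> [t0 _]; rewrite hit_probE sumr_ge0. Qed.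

Lemma hit_prob_le1 t f i : is_prob_vector t -> hit_prob t f i <= 1.
Proof.
move=> [t0 <-]; rewrite hit_probE [leRHS](bigID (fun j => f j == i)) /= lerDl.
exact: sumr_ge0.
Qed.

End ProbVector.

Section CondAcc.
Context {R : realType} {T : Type} {K : nat}.
Variables (eta : T -> 'I_K -> R) (Tm : T -> 'I_K -> 'I_K -> R).
Hypotheses (eta_prob : forall x, is_prob_vector (eta x))
  (Tm_prob : forall x i, is_prob_vector (Tm x i)).

Lemma cond_accE f x :
  cond_acc eta Tm f x = \sum_i eta x i * hit_prob (Tm x i) (f x) i.
Proof.
rewrite /cond_acc; apply: eq_bigr => i _; rewrite mulr_sumr.
by apply: eq_bigr => j _; rewrite mulrA.
Qed.

Lemma cond_acc_ge0 f x : 0 <= cond_acc eta Tm f x.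
Proof. by rewrite cond_accE convex_comb_ge0 // => i; apply: hit_prob_ge0. Qed.

Lemma cond_acc_le1 f x : cond_acc eta Tm f x <= 1.
Proof. by rewrite cond_accE convex_comb_le1 // => i; apply: hit_prob_le1. Qed.

Lemma cond_acc_sub1E f x :
  \sum_i \sum_j eta x i * Tm x i j * ((f x j == i)%:R - 1) = cond_acc eta Tm f x - 1.
Proof.
have joint_mass : \sum_i \sum_j eta x i * Tm x i j = 1.
  rewrite -(proj2 (eta_prob x)); apply: eq_bigr => i _.
  by rewrite -mulr_sumr (proj2 (Tm_prob x i)) mulr1.
rewrite /cond_acc -[X in _ = _ - X]joint_mass -sumrB; apply: eq_bigr => i _.
by rewrite -sumrB; apply: eq_bigr => j _; rewrite mulrBr mulr1.
Qed.

Lemma cond_acc_drop_terms f x k :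
  0 <= cond_acc eta Tm f x - eta x k * hit_prob (Tm x k) (f x) k <= 1 - eta x k.
Proof.
rewrite cond_accE; apply: convex_comb_drop_terms => // i.
by rewrite hit_prob_ge0 ?hit_prob_le1.
Qed.

End CondAcc.

Section Integrals.
Context {R : realType} {d : measure_display} {X : measurableType d}.
Variable P : probability X R.

Lemma probability_inhabited : inhabited X.
Proof.
have [[x _]|noX] := pselect (exists x : X, True); first by constructor.
have X0 : setT = set0 :> set X by apply/seteqP; split => // x _; apply: noX; exists x.
by have := probability_setT P; rewrite X0 measure0 => /eqP; rewrite eqe eq_sym oner_eq0.
Qed.

Lemma measurable_fun_indic_eq (K : nat) (g : X -> 'I_K) k :
  measurable [set x | g x = k] -> measurable_fun setT (fun x => (g x == k)%:R : R).
Proof.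
move=> mgk; rewrite (_ : (fun x => _) = \1_[set x | g x = k]); first exact: measurable_indic.
apply/funext => x; rewrite indicE; congr (_%:R).
by case: eqVneq => gxk; [rewrite mem_set | rewrite memNset //=; apply/eqP].
Qed.

Lemma measurable_fun_select (K : nat) (g : X -> 'I_K) (h : 'I_K -> X -> R) :
  (forall k, measurable [set x | g x = k]) -> (forall k, measurable_fun setT (h k)) ->
  measurable_fun setT (fun x => h (g x) x).
Proof.
move=> mg mh; rewrite (_ : (fun x => _) = fun x => \sum_k (g x == k)%:R * h k x).
  by apply: measurable_sum => k; apply: measurable_funM => //; exact: measurable_fun_indic_eq.
apply/funext => x; rewrite (bigD1 (g x)) //= eqxx mul1r big1 ?addr0 // => k.
by rewrite eq_sym => /negbTE ->; rewrite mul0r.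
Qed.

Lemma integrable_bounded (g : X -> R) (M : R) : measurable_fun setT g ->
  (forall x, `|g x| <= M) -> P.-integrable setT (EFin \o g).
Proof.
move=> mg gM; apply: measurable_bounded_integrable => //.
  by rewrite (le_lt_trans (probability_le1 _ _)) ?ltry.
by exists M; split=> [|N MN x _]; [exact: num_real | exact: le_trans (gM x) (ltW MN)].
Qed.

Lemma abse_integralB_le (F G D : X -> R) (M : R) :
  measurable_fun setT F -> measurable_fun setT G -> measurable_fun setT D ->
  (forall x, `|F x| <= M) -> (forall x, `|G x| <= M) ->
  (forall x, 0 <= F x - G x <= D x) ->
  (`| \int[P]_x (F x)%:E - \int[P]_x (G x)%:E | <= \int[P]_x (D x)%:E)%E.
Proof.
move=> mF mG mD FM GM FGD.
rewrite -integralB_EFin //; try exact: integrable_bounded.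
have mFG : measurable_fun setT (EFin \o (fun x => F x - G x)).
  exact/measurable_EFinP/measurable_funB.
under eq_integral do rewrite -EFinB.
apply: le_trans (le_abse_integral _ _ mFG) _ => //.
apply: ge0_le_integral => //; first exact: measurableT_comp.
  exact/measurable_EFinP.
by move=> x _; have /andP[? ?] := FGD x; rewrite /= lee_fin ger0_norm.
Qed.

End Integrals.

Section Accuracy.
Context {R : realType} {d : measure_display} {X : measurableType d} {K : nat}.
Variables (P : probability X R) (eta : X -> 'I_K -> R) (Tm : X -> 'I_K -> 'I_K -> R).
Hypotheses (eta_meas : forall k, measurable_fun setT (fun x => eta x k))
  (Tm_meas : forall i j, measurable_fun setT (fun x => Tm x i j))
  (eta_prob : forall x, is_prob_vector (eta x))
  (Tm_prob : forall x i, is_prob_vector (Tm x i)).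
Variable f : X -> 'I_K -> 'I_K.
Hypothesis f_meas : forall i j, measurable_fun setT (fun x => (f x j == i)%:R : R).

Lemma measurable_hit_prob i : measurable_fun setT (fun x => hit_prob (Tm x i) (f x) i).
Proof. by apply: measurable_sum => j; apply: measurable_funM. Qed.

Lemma measurable_cond_acc : measurable_fun setT (cond_acc eta Tm f).
Proof.
rewrite (_ : cond_acc eta Tm f = fun x => \sum_i eta x i * hit_prob (Tm x i) (f x) i).
  by apply: measurable_sum => i; apply: measurable_funM => //; exact: measurable_hit_prob.
by apply/funext => x; rewrite cond_accE.
Qed.

Lemma ACC_first_order (ystar : X -> 'I_K) :
  (forall k, measurable [set x | ystar x = k]) ->
  (`| ACC P eta Tm f
      - \int[P]_x (eta x (ystar x) * hit_prob (Tm x (ystar x)) (f x) (ystar x))%:E |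
    <= \int[P]_x (1 - eta x (ystar x))%:E)%E.
Proof.
move=> ystar_meas; apply: (@abse_integralB_le _ _ _ _ _ _ _ 1).
- exact: measurable_cond_acc.
- apply: (measurable_fun_select (h := fun k x => eta x k * hit_prob (Tm x k) (f x) k)) => // k.
  by apply: measurable_funM => //; exact: measurable_hit_prob.
- apply: measurable_funB => //.
  exact: (measurable_fun_select (h := fun k x => eta x k)).
- by move=> x; rewrite ger0_norm ?cond_acc_le1 ?cond_acc_ge0.
- move=> x; have eta_ge0 := proj1 (eta_prob x).
  by rewrite ger0_norm ?mulr_ge0 ?mulr_ile1 ?hit_prob_ge0 ?hit_prob_le1 ?prob_vector_le1.
- by move=> x; apply: cond_acc_drop_terms.
Qed.

Lemma ECE_onehot (S : seq R) : uniq S -> 1 \in S ->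
  ECE P eta Tm (fun x j => onehot (f x j)) f S = (1 - ACC P eta Tm f)%E.
Proof.
move=> S_uniq S1.
have acc_int : P.-integrable setT (EFin \o cond_acc eta Tm f).
  apply: (@integrable_bounded _ _ _ _ _ 1); first exact: measurable_cond_acc.
  by move=> x; rewrite ger0_norm ?cond_acc_le1 ?cond_acc_ge0.
have one_int : P.-integrable setT (EFin \o (fun _ : X => 1 : R)).
  by apply: (@integrable_bounded _ _ _ _ _ 1) => // x; rewrite normr1.
have int1 : (\int[P]_x (1 : R)%:E = 1)%E.
  by rewrite integral_cst // mul1e; apply: probability_setT.
rewrite /ECE (bigD1_seq 1) //= big1 ?adde0 => [|c c1]; last first.
  rewrite (eq_integral (fun=> 0%E)) ?integral0 ?abse0 // => x _; congr EFin.
  rewrite big1 // => i _; rewrite big1 // => j _.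
  by rewrite confidence_onehot eq_sym (negbTE c1) mulr0 mul0r.
rewrite (eq_integral (fun x => (cond_acc eta Tm f x - 1)%:E)); last first.
  move=> x _; rewrite -(cond_acc_sub1E eta_prob Tm_prob); congr EFin.
  apply: eq_bigr => i _; apply: eq_bigr => j _.
  by rewrite confidence_onehot eqxx mulr1.
under eq_integral do rewrite EFinB.
rewrite integralB_EFin // int1 /ACC.
have : (0 <= \int[P]_x (cond_acc eta Tm f x)%:E)%E.
  by apply: integral_ge0 => x _; rewrite lee_fin cond_acc_ge0.
have : (\int[P]_x (cond_acc eta Tm f x)%:E <= 1)%E.
  by rewrite -int1; apply: le_integral => // x _; rewrite lee_fin cond_acc_le1.
case: (\int[P]_x _)%E => [a| |] //; rewrite !lee_fin => a_le1 a_ge0.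
by rewrite -EFinB /= ler0_norm ?subr_le0 // opprB.
Qed.

End Accuracy.

Theorem theorem2 (R : realType) :
  exists c : R, 0 <= c /\
  forall (K : nat) (d : measure_display) (X : measurableType d)
    (P : probability X R)
    (eta : X -> 'I_K -> R) (Tm : X -> 'I_K -> 'I_K -> R)
    (ystar : X -> 'I_K) (kstar : X -> 'I_K -> 'I_K),
    (* regularity *)
    (forall k, measurable_fun setT (fun x => eta x k)) ->
    (forall i j, measurable_fun setT (fun x => Tm x i j)) ->
    (forall k, measurable [set x | ystar x = k]) ->
    (forall j k, measurable [set x | kstar x j = k]) ->
    (* eta is the clean posterior, T(x) a transition matrix *)
    (forall x, is_prob_vector (eta x)) ->
    (forall x i, is_prob_vector (Tm x i)) ->
    (* diagonal dominance *)
    (forall x i j, i != j -> Tm x i j < Tm x i i) ->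
    (* Y*(x) = argmax_k eta_k(x) and k*(j) = argmax_k T_kj(x) (any tie-breaking) *)
    (forall x k, eta x k <= eta x (ystar x)) ->
    (forall x j k, Tm x k j <= Tm x (kstar x j) j) ->
    let delta := fun x => 1 - eta x (ystar x) in
    let fNC := fun (x : X) (j : 'I_K) => j in
    let fFC := kstar in
    let Cst := fun x => \sum_(j < K | kstar x j == ystar x) Tm x (ystar x) j in
    let Edelta := (\int[P]_x (delta x)%:E)%E in
    (* (a) *)
    (`| ACC P eta Tm fNC
        - \int[P]_x ((1 - delta x) * Tm x (ystar x) (ystar x))%:E | <= c%:E * Edelta)%E /\
    (`| ACC P eta Tm fFC
        - \int[P]_x ((1 - delta x) * Cst x)%:E | <= c%:E * Edelta)%E /\
    (* (b) *)
    (forall x j, confidence (@onehot R K (fNC x j)) = 1) /\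
    (forall x j, confidence (@onehot R K (fFC x j)) = 1) /\
    (forall S : seq R, uniq S ->
       (forall x j, confidence (@onehot R K (fNC x j)) \in S) ->
       ECE P eta Tm (fun x j => @onehot R K (fNC x j)) fNC S = (1 - ACC P eta Tm fNC)%E) /\
    (forall S : seq R, uniq S ->
       (forall x j, confidence (@onehot R K (fFC x j)) \in S) ->
       ECE P eta Tm (fun x j => @onehot R K (fFC x j)) fFC S = (1 - ACC P eta Tm fFC)%E).
Proof.
exists 1; split => // K d X P eta Tm ystar kstar eta_meas Tm_meas ystar_meas kstar_meas
  eta_prob Tm_prob _ _ _ delta fNC fFC Cst Edelta.
have fNC_meas i j : measurable_fun setT (fun x => (fNC x j == i)%:R : R).
  exact: measurable_cst.
have fFC_meas i j : measurable_fun setT (fun x => (fFC x j == i)%:R : R).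
  exact: measurable_fun_indic_eq.
have [x0] := probability_inhabited P.
have one_in_bins (f : X -> 'I_K -> 'I_K) (S : seq R) :
    (forall x j, confidence (@onehot R K (f x j)) \in S) -> 1 \in S.
  by move=> /(_ x0 (ystar x0)); rewrite confidence_onehot.
have NC_target : (\int[P]_x ((1 - delta x) * Tm x (ystar x) (ystar x))%:E =
    \int[P]_x (eta x (ystar x) * hit_prob (Tm x (ystar x)) (fNC x) (ystar x))%:E)%E.
  by apply: eq_integral => x _; rewrite /delta subKr hit_prob_id.
have FC_target : (\int[P]_x ((1 - delta x) * Cst x)%:E =
    \int[P]_x (eta x (ystar x) * hit_prob (Tm x (ystar x)) (fFC x) (ystar x))%:E)%E.
  by apply: eq_integral => x _; rewrite /delta subKr /Cst hit_probE.
rewrite !mul1e NC_target FC_target.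
split; [exact: ACC_first_order | split; [exact: ACC_first_order | split]].
  by move=> x j; apply: confidence_onehot.
split; first by move=> x j; apply: confidence_onehot.
by split=> S S_uniq /one_in_bins S1; apply: ECE_onehot.
Qed.
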